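(* Let $d<\infty$, let $f$ be the embedding map of an analytic disc $V\subset\mathbb{B}_d$ attached to the unit sphere, and let $\mu(z)=\lambda\frac{\alpha-z}{1-\bar\alpha z}$ with $\lambda\in\mathbb{T}$, $\alpha\in\mathbb{D}$. Then for all $\xi\in\mathbb{T}$, $$A_{f\circ\mu}(\xi)=A_f(\mu(\xi))\,\frac{1-|\alpha|^2}{|\alpha-\xi|^2}.$$
   Context: $\mathbb{D}$ is the open unit disc, $\mathbb{T}$ the unit circle, $\mathbb{B}_d$ the open unit ball of $\mathbb{C}^d$. The Drury–Arveson space $H^2_d$ is the RKHS on $\mathbb{B}_d$ with kernel $1/(1-\langle z,w\rangle)$, with multiplier algebra $\mathcal{M}_d$; a variety is a common zero set of a family of functions in $\mathcal{M}_d$. An analytic disc attached to the unit sphere is a variety $V\subset\mathbb{B}_d$ for which there is an injective analytic $f:\mathbb{D}\to\mathbb{B}_d$ with $f'\neq0$ on $\mathbb{D}$, $V=f(\mathbb{D})$, $f$ extends to a $C^2$ map on $\overline{\mathbb{D}}$, and for $x\in\overline{\mathbb{D}}$, $\|f(x)\|=1$ iff $|x|=1$ ($f$ is an embedding map). For a $C^1$ map $h$ on $\overline{\mathbb{D}}$, $A_h(\xi)=\langle h(\xi),h'(\xi)\xi\rangle$ for $\xi\in\mathbb{T}$. *)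

From Stdlib Require Import Reals Lra.
From Coquelicot Require Import Coquelicot.
Open Scope R_scope.

(** Points of C^d are represented by their coordinate functions nat -> C;
    only the coordinates k < d are relevant. *)

Fixpoint csum (n : nat) (g : nat -> C) : C :=
  match n with
  | O => 0%C
  | S m => (csum m g + g m)%C
  end.

Definition cinner (d : nat) (z w : nat -> C) : C :=
  csum d (fun k => (z k * Cconj (w k))%C).

Fixpoint rsum (n : nat) (g : nat -> R) : R :=
  match n with
  | O => 0
  | S m => rsum m g + g m
  end.

Definition vnorm2 (d : nat) (z : nat -> C) : R :=
  rsum d (fun k => (Cmod (z k))^2).

Definition cderiv (h : C -> C) (z l : C) : Prop :=
  is_derive (K := C_AbsRing) (V := C_NormedModule) h z l.

(** For a map that is C^1 on the closed disc and holomorphic inside this is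
    the value at boundary points of the (continuous extension of the)
    complex derivative h'. *)
Definition cderiv_cl (h : C -> C) (z l : C) : Prop :=
  forall eps : R, 0 < eps -> exists delta : R, 0 < delta /\
    forall w : C, Cmod w <= 1 -> w <> z -> Cmod (w - z) < delta ->
      Cmod ((h w - h z) / (w - z) - l)%C < eps.

Definition C1_with (u ux uy : C -> R) : Prop :=
  (forall p : C, is_derive (fun t => u (t, snd p)) (fst p) (ux p) /\
                 is_derive (fun t => u (fst p, t)) (snd p) (uy p)) /\
  (forall p : C, continuous ux p /\ continuous uy p).

Definition C1_real (u : C -> R) : Prop := exists ux uy, C1_with u ux uy.

Definition C2_real (u : C -> R) : Prop :=
  exists ux uy, C1_with u ux uy /\ C1_real ux /\ C1_real uy.

Definition C2_map (h : C -> C) : Prop :=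
  C2_real (fun p => Re (h p)) /\ C2_real (fun p => Im (h p)).

(** f : D -> B_d is an embedding map of an analytic disc attached to the
    unit sphere (without the condition that f(D) be a variety). *)
Definition embedding_map (d : nat) (f : nat -> C -> C) : Prop :=
  (forall k z, (k < d)%nat -> Cmod z < 1 -> exists l, cderiv (f k) z l) /\
  (forall z, Cmod z < 1 -> ~ (forall k, (k < d)%nat -> cderiv (f k) z 0%C)) /\
  (forall x y, Cmod x < 1 -> Cmod y < 1 ->
     (forall k, (k < d)%nat -> f k x = f k y) -> x = y) /\
  (forall x, Cmod x < 1 -> vnorm2 d (fun k => f k x) < 1) /\
  (exists F : nat -> C -> C,
     (forall k x, (k < d)%nat -> Cmod x <= 1 -> F k x = f k x) /\
     (forall k, (k < d)%nat -> C2_map (F k))) /\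
  (forall x, Cmod x <= 1 -> (vnorm2 d (fun k => f k x) = 1 <-> Cmod x = 1)).

(** A_h(xi) = < h(xi), h'(xi) xi >, given the values hv = h(xi) and the
    derivative vector dh = h'(xi). *)
Definition Aval (d : nat) (hv dh : nat -> C) (xi : C) : C :=
  cinner d hv (fun k => (dh k * xi)%C).

Definition mob (lam alpha : C) (z : C) : C :=
  (lam * ((alpha - z) / (1 - Cconj alpha * z)))%C.

From Stdlib Require Import Reals Lra Lia IndefiniteDescription.
From Coquelicot Require Import Coquelicot.
Open Scope R_scope.

(* The C^2 extension F of f is real-differentiable at every point of the closed
   disc. Inside the disc, where f is holomorphic, its partial derivatives satisfy
   the Cauchy-Riemann equations; by continuity they satisfy them on the circle
   too, so f has a complex derivative relative to the closed disc at every
   boundary point. The Moebius map satisfies mu w - mu xi = q(w) (w - xi) with q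
   continuous and nonvanishing on the closed disc, so (f o mu)'(xi) = f'(mu xi) q(xi),
   and such derivatives are unique. On the circle, q(xi) xi equals mu(xi) times the
   real number (1 - |alpha|^2) / |alpha - xi|^2, and a real factor passes through
   the conjugate-linear slot of the inner product defining A. *)

Lemma im_le_Cmod (c : C) : Rabs (Im c) <= Cmod c.
Proof. eapply Rle_trans; [apply Rmax_r | apply Rmax_Cmod]. Qed.

Lemma Cmod_le_Re_Im (c : C) : Cmod c <= Rabs (Re c) + Rabs (Im c).
Proof.
  pose proof (Rabs_pos (Re c)). pose proof (Rabs_pos (Im c)).
  apply Rsqr_incr_0_var; [| lra].
  replace (Rsqr (Cmod c)) with (Re c ^ 2 + Im c ^ 2)
    by (rewrite <- Cmod2_alt; unfold Rsqr; ring).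
  rewrite <- (pow2_abs (Re c)), <- (pow2_abs (Im c)). unfold Rsqr. nra.
Qed.

Lemma continuous_Cmod_eps (g : C -> R) (p : C) : continuous g p ->
  forall eps, 0 < eps -> exists delta, 0 < delta /\
    forall q, Cmod (q - p) < delta -> Rabs (g q - g p) < eps.
Proof.
  intros Hg eps Heps.
  apply filterlim_locally with (eps := mkposreal eps Heps) in Hg.
  destruct Hg as [[delta Hdelta] Hnear].
  exists delta. split; [exact Hdelta |].
  intros q Hq. apply Hnear.
  pose proof (re_le_Cmod (q - p)). pose proof (im_le_Cmod (q - p)).
  split; [change (Rabs (Re (q - p)%C) < delta) | change (Rabs (Im (q - p)%C) < delta)]; lra.
Qed.

Lemma closed_disc_approx (p : C) (delta : R) : Cmod p <= 1 -> 0 < delta ->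
  exists q, Cmod q < 1 /\ q <> p /\ Cmod (q - p) < delta.
Proof.
  intros Hp Hdelta.
  set (s := Rmin delta 1 / 2).
  assert (Hs : 0 < s /\ s < delta /\ s < 1).
  { unfold s. pose proof (Rmin_l delta 1). pose proof (Rmin_r delta 1).
    assert (0 < Rmin delta 1) by (apply Rmin_pos; lra). lra. }
  destruct (Ceq_dec p 0) as [-> | Hp0].
  - exists (RtoC s). replace (RtoC s - 0)%C with (RtoC s) by ring.
    rewrite Cmod_R, Rabs_pos_eq by lra.
    split; [lra | split; [| lra]].
    intros E. apply RtoC_inj in E. lra.
  - exists (RtoC (1 - s) * p)%C.
    replace (RtoC (1 - s) * p - p)%C with (RtoC (- s) * p)%C
      by (rewrite RtoC_minus, RtoC_opp; ring).
    rewrite !Cmod_mult, !Cmod_R, Rabs_Ropp, !Rabs_pos_eq by lra.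
    pose proof (Cmod_gt_0 p) as Hpos. apply Hpos in Hp0.
    split; [nra | split; [| nra]].
    intros E. assert (Cmod (RtoC (1 - s) * p)%C = Cmod p) as Em by now rewrite E.
    rewrite Cmod_mult, Cmod_R, Rabs_pos_eq in Em by lra. nra.
Qed.

Lemma closed_disc_eq (g h : C -> R) (p : C) :
  continuous g p -> continuous h p -> Cmod p <= 1 ->
  (forall z, Cmod z < 1 -> g z = h z) -> g p = h p.
Proof.
  intros Hg Hh Hp Heq.
  apply Rminus_diag_uniq, Rabs_eq_0, Rle_antisym; [| apply Rabs_pos].
  apply Rle_plus_epsilon. intros eps Heps.
  destruct (continuous_Cmod_eps g p Hg (eps / 2)) as [d1 [Hd1 H1]]; [lra |].
  destruct (continuous_Cmod_eps h p Hh (eps / 2)) as [d2 [Hd2 H2]]; [lra |].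
  destruct (closed_disc_approx p (Rmin d1 d2) Hp) as [q [Hq [_ Hqp]]];
    [apply Rmin_pos; lra |].
  specialize (H1 q (Rlt_le_trans _ _ _ Hqp (Rmin_l _ _))).
  specialize (H2 q (Rlt_le_trans _ _ _ Hqp (Rmin_r _ _))).
  rewrite Heq in H1 by exact Hq.
  replace (g p - h p) with (- (h q - g p) + (h q - h p)) by ring.
  eapply Rle_trans; [apply Rabs_triang |]. rewrite Rabs_Ropp. lra.
Qed.

Lemma cderiv_cl_unique (h : C -> C) (z L1 L2 : C) : Cmod z <= 1 ->
  cderiv_cl h z L1 -> cderiv_cl h z L2 -> L1 = L2.
Proof.
  intros Hz H1 H2.
  apply Ceq_minus, Cmod_eq_0, Rle_antisym; [| apply Cmod_ge_0].
  apply Rle_plus_epsilon. intros eps Heps.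
  destruct (H1 (eps / 2)) as [d1 [Hd1 K1]]; [lra |].
  destruct (H2 (eps / 2)) as [d2 [Hd2 K2]]; [lra |].
  destruct (closed_disc_approx z (Rmin d1 d2) Hz) as [w [Hw [Hwz Hwd]]];
    [apply Rmin_pos; lra |].
  specialize (K1 w ltac:(lra) Hwz (Rlt_le_trans _ _ _ Hwd (Rmin_l _ _))).
  specialize (K2 w ltac:(lra) Hwz (Rlt_le_trans _ _ _ Hwd (Rmin_r _ _))).
  set (Q := ((h w - h z) / (w - z))%C) in *.
  replace (L1 - L2)%C with (- (Q - L1) + (Q - L2))%C by ring.
  eapply Rle_trans; [apply Cmod_triangle |]. rewrite Cmod_opp. lra.
Qed.

Definition cderiv_eps (h : C -> C) (z l : C) : Prop :=
  forall eps, 0 < eps -> exists delta, 0 < delta /\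
    forall w, Cmod (w - z) < delta ->
      Cmod (h w - h z - l * (w - z))%C <= eps * Cmod (w - z).

Lemma cderiv_eps_of_cderiv (h : C -> C) (z l : C) : cderiv h z l -> cderiv_eps h z l.
Proof.
  intros [_ Hd] eps Heps.
  destruct (Hd z (fun P HP => HP) (mkposreal eps Heps)) as [[delta Hdelta] Hnear].
  exists delta. split; [exact Hdelta |].
  intros w Hw. rewrite (Cmult_comm l). exact (Hnear w Hw).
Qed.

Lemma C1_with_differentiable (u ux uy : C -> R) (p : C) : C1_with u ux uy ->
  differentiable_pt_lim (fun x y => u (x, y)) (fst p) (snd p) (ux p) (uy p).
Proof.
  intros [Hd Hc]. destruct p as [x y].
  apply filterdiff_differentiable_pt_lim.
  apply (is_derive_filterdiff (fun a b => u (a, b)) x y (fun a b => ux (a, b))).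
  - apply filter_forall. intros [a b]. exact (proj1 (Hd (a, b))).
  - exact (proj2 (Hd (x, y))).
  - apply (continuous_ext ux); [intros [a b]; reflexivity | exact (proj1 (Hc (x, y)))].
Qed.

Lemma C1_with_first_order (u ux uy : C -> R) (p : C) : C1_with u ux uy ->
  forall eps, 0 < eps -> exists delta, 0 < delta /\ forall q, Cmod (q - p) < delta ->
    Rabs (u q - u p - (ux p * Re (q - p) + uy p * Im (q - p))) <= eps * Cmod (q - p).
Proof.
  intros Hu eps Heps.
  destruct (C1_with_differentiable u ux uy p Hu (mkposreal eps Heps)) as [[delta Hdelta] Hnear].
  exists delta. split; [exact Hdelta |].
  intros [a b] Hq. destruct p as [x y].
  pose proof (re_le_Cmod ((a, b) - (x, y))%C). pose proof (im_le_Cmod ((a, b) - (x, y))%C).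
  pose proof (Rmax_Cmod ((a, b) - (x, y))%C) as Hmax.
  change (Re ((a, b) - (x, y))%C) with (a - x) in *.
  change (Im ((a, b) - (x, y))%C) with (b - y) in *.
  eapply Rle_trans; [apply (Hnear a b); simpl; lra |].
  apply Rmult_le_compat_l; [lra | exact Hmax].
Qed.

Lemma derivable_pt_lim_line (F f : C -> C) (P : C -> R) (z l e : C) (t0 r : R) :
  (forall a b, P (a - b)%C = P a - P b) ->
  (forall s c, P (RtoC s * c)%C = s * P c) ->
  (forall c, Rabs (P c) <= Cmod c) ->
  0 < r -> (forall w, Cmod (w - z) < r -> F w = f w) ->
  cderiv_eps f z l -> Cmod e = 1 ->
  derivable_pt_lim (fun t => P (F (z + RtoC (t - t0) * e)%C)) t0 (P (l * e)%C).
Proof.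
  intros Psub Pscal Pbound Hr HF Hd He eps Heps.
  destruct (Hd (eps / 2)) as [delta [Hdelta Hw]]; [lra |].
  assert (Hmin : 0 < Rmin delta r) by (apply Rmin_pos; lra).
  exists (mkposreal _ Hmin). intros h Hh0 Hh. simpl in Hh.
  replace (t0 + h - t0) with h by ring. replace (t0 - t0) with 0 by ring.
  replace (z + RtoC 0 * e)%C with z by ring.
  set (w := (z + RtoC h * e)%C).
  assert (Hwz : Cmod (w - z) = Rabs h).
  { unfold w. replace (z + RtoC h * e - z)%C with (RtoC h * e)%C by ring.
    rewrite Cmod_mult, He, Cmod_R. ring. }
  pose proof (Rmin_l delta r). pose proof (Rmin_r delta r).
  rewrite (HF w) by (rewrite Hwz; lra).
  rewrite (HF z) by (replace (z - z)%C with (RtoC 0) by ring; rewrite Cmod_R, Rabs_R0; exact Hr).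
  specialize (Hw w ltac:(rewrite Hwz; lra)). rewrite Hwz in Hw.
  set (N := (f w - f z - l * (w - z))%C) in Hw.
  assert (HP : P (f w) - P (f z) = P N + h * P (l * e)%C).
  { unfold N. rewrite !Psub, <- Pscal. unfold w.
    replace (l * (z + RtoC h * e - z))%C with (RtoC h * (l * e))%C by ring. ring. }
  rewrite HP.
  replace ((P N + h * P (l * e)%C) / h - P (l * e)%C) with (P N / h) by (field; exact Hh0).
  unfold Rdiv. rewrite Rabs_mult, Rabs_inv.
  assert (0 < Rabs h) by (apply Rabs_pos_lt; exact Hh0).
  apply Rmult_lt_reg_r with (Rabs h); [lra |].
  rewrite Rmult_assoc, Rinv_l by lra. pose proof (Pbound N). nra.
Qed.

Section CauchyRiemann.

Variables (F f : C -> C) (ux uy vx vy : C -> R).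
Hypothesis HRe : C1_with (fun p => Re (F p)) ux uy.
Hypothesis HIm : C1_with (fun p => Im (F p)) vx vy.
Hypothesis HF : forall w, Cmod w <= 1 -> F w = f w.

Lemma partials_of_cderiv_eps (z l : C) : Cmod z < 1 -> cderiv_eps f z l ->
  ux z = Re l /\ uy z = - Im l /\ vx z = Im l /\ vy z = Re l.
Proof.
  intros Hz Hd.
  assert (HFz : forall w, Cmod (w - z) < 1 - Cmod z -> F w = f w).
  { intros w Hw. apply HF. replace w with (z + (w - z))%C by ring.
    pose proof (Cmod_triangle z (w - z)). lra. }
  assert (Hpartial : forall (P : C -> R) (e : C) (t0 L : R) (g : R -> C),
    (forall a b, P (a - b)%C = P a - P b) -> (forall s c, P (RtoC s * c)%C = s * P c) ->
    (forall c, Rabs (P c) <= Cmod c) -> Cmod e = 1 ->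
    (forall t, g t = (z + RtoC (t - t0) * e)%C) ->
    is_derive (fun t => P (F (g t))) t0 L -> L = P (l * e)%C).
  { intros P e t0 L g Psub Pscal Pbound He Hg HL.
    apply is_derive_Reals in HL.
    eapply uniqueness_limite; [exact HL |].
    apply (derivable_pt_lim_ext (fun t => P (F (z + RtoC (t - t0) * e)%C))).
    { intros t. now rewrite Hg. }
    exact (derivable_pt_lim_line F f P z l e t0 (1 - Cmod z)
             Psub Pscal Pbound ltac:(lra) HFz Hd He). }
  assert (ReP : forall a b, Re (a - b)%C = Re a - Re b) by reflexivity.
  assert (ImP : forall a b, Im (a - b)%C = Im a - Im b) by reflexivity.
  destruct (proj1 HRe z) as [Hux Huy]. destruct (proj1 HIm z) as [Hvx Hvy].
  destruct z as [x0 y0].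
  assert (Hx : forall t, ((t, y0) : C) = ((x0, y0) + RtoC (t - x0) * RtoC 1)%C).
  { intros t. apply injective_projections; simpl; ring. }
  assert (Hy : forall t, ((x0, t) : C) = ((x0, y0) + RtoC (t - y0) * Ci)%C).
  { intros t. apply injective_projections; simpl; ring. }
  rewrite (Hpartial Re _ _ _ _ ReP re_scal_l re_le_Cmod Cmod_1 Hx Hux),
    (Hpartial Re _ _ _ _ ReP re_scal_l re_le_Cmod Cmod_Ci Hy Huy),
    (Hpartial Im _ _ _ _ ImP im_scal_l im_le_Cmod Cmod_1 Hx Hvx),
    (Hpartial Im _ _ _ _ ImP im_scal_l im_le_Cmod Cmod_Ci Hy Hvy).
  destruct l as [a b]. unfold Re, Im, Ci; simpl. repeat split; ring.
Qed.

Hypothesis Hhol : forall z, Cmod z < 1 -> exists l, cderiv_eps f z l.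

Lemma cauchy_riemann_closed_disc (p : C) : Cmod p <= 1 -> ux p = vy p /\ uy p = - vx p.
Proof.
  intros Hp. split; [apply closed_disc_eq | apply (closed_disc_eq _ (fun q => - vx q))]; auto.
  - exact (proj1 (proj2 HRe p)).
  - exact (proj2 (proj2 HIm p)).
  - intros z Hz. destruct (Hhol z Hz) as [l Hl].
    destruct (partials_of_cderiv_eps z l Hz Hl) as [-> [_ [_ ->]]]. reflexivity.
  - exact (proj2 (proj2 HRe p)).
  - exact (@continuous_opp C_UniformSpace R_AbsRing R_NormedModule vx p (proj1 (proj2 HIm p))).
  - intros z Hz. destruct (Hhol z Hz) as [l Hl].
    destruct (partials_of_cderiv_eps z l Hz Hl) as [_ [-> [-> _]]]. reflexivity.
Qed.

Lemma cderiv_cl_of_C1_extension (p : C) : Cmod p <= 1 -> cderiv_cl f p (ux p, vx p).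
Proof.
  intros Hp. destruct (cauchy_riemann_closed_disc p Hp) as [CR1 CR2].
  intros eps Heps.
  destruct (C1_with_first_order _ _ _ p HRe (eps / 4)) as [d1 [Hd1 H1]]; [lra |].
  destruct (C1_with_first_order _ _ _ p HIm (eps / 4)) as [d2 [Hd2 H2]]; [lra |].
  exists (Rmin d1 d2). split; [apply Rmin_pos; lra |].
  intros w Hw Hwp Hd.
  specialize (H1 w (Rlt_le_trans _ _ _ Hd (Rmin_l _ _))).
  specialize (H2 w (Rlt_le_trans _ _ _ Hd (Rmin_r _ _))).
  rewrite <- !HF by lra.
  assert (Hnz : (w - p)%C <> 0) by (intros E; apply Hwp, Ceq_minus, E).
  set (N := (F w - F p - (ux p, vx p) * (w - p))%C).
  assert (ReN : Re N = Re (F w) - Re (F p) - (ux p * Re (w - p) + uy p * Im (w - p))).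
  { rewrite CR2. unfold N. destruct (F w), (F p), w, p. unfold Re, Im; simpl; ring. }
  assert (ImN : Im N = Im (F w) - Im (F p) - (vx p * Re (w - p) + vy p * Im (w - p))).
  { rewrite <- CR1. unfold N. destruct (F w), (F p), w, p. unfold Re, Im; simpl; ring. }
  assert (HN : Cmod N <= eps / 2 * Cmod (w - p)).
  { pose proof (Cmod_le_Re_Im N). rewrite ReN, ImN in *. lra. }
  replace ((F w - F p) / (w - p) - (ux p, vx p))%C with (N / (w - p))%C
    by (unfold N; field; exact Hnz).
  rewrite Cmod_div by exact Hnz.
  pose proof (Cmod_gt_0 (w - p)) as Hpos. apply Hpos in Hnz.
  apply Rmult_lt_reg_r with (Cmod (w - p)); [exact Hnz |].
  unfold Rdiv. rewrite Rmult_assoc, Rinv_l by lra. nra.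
Qed.

End CauchyRiemann.

Lemma cderiv_cl_comp (h phi q : C -> C) (xi D : C) :
  (forall w, Cmod w <= 1 -> Cmod (phi w) <= 1) ->
  (forall w, Cmod w <= 1 -> w <> xi -> phi w <> phi xi) ->
  (forall w, Cmod w <= 1 -> (phi w - phi xi = q w * (w - xi))%C) ->
  (forall eps, 0 < eps -> exists delta, 0 < delta /\ forall w, Cmod w <= 1 ->
     Cmod (w - xi) < delta -> Cmod (q w - q xi) < eps) ->
  cderiv_cl h (phi xi) D -> cderiv_cl (fun z => h (phi z)) xi (D * q xi)%C.
Proof.
  intros Hin Hinj Hsub Hq Hd eps Heps.
  set (M := Cmod (q xi) + 1). set (MD := Cmod D + 1).
  pose proof (Cmod_ge_0 (q xi)). pose proof (Cmod_ge_0 D).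
  assert (HM : 0 < M /\ 0 < MD) by (unfold M, MD; lra). destruct HM as [HM HMD].
  destruct (Hd (eps / (2 * M))) as [d1 [Hd1 H1]]; [apply Rdiv_lt_0_compat; lra |].
  destruct (Hq (Rmin 1 (eps / (2 * MD)))) as [d2 [Hd2 H2]].
  { apply Rmin_pos; [lra | apply Rdiv_lt_0_compat; lra]. }
  assert (Hd1M : 0 < d1 / M) by (apply Rdiv_lt_0_compat; lra).
  exists (Rmin (d1 / M) d2). split; [apply Rmin_pos; lra |].
  intros w Hw Hwxi Hd12.
  specialize (H2 w Hw (Rlt_le_trans _ _ _ Hd12 (Rmin_r _ _))).
  pose proof (Rmin_l 1 (eps / (2 * MD))). pose proof (Rmin_r 1 (eps / (2 * MD))).
  assert (Hqw : Cmod (q w) <= M).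
  { unfold M. replace (q w) with (q xi + (q w - q xi))%C by ring.
    pose proof (Cmod_triangle (q xi) (q w - q xi)). lra. }
  assert (Hnz : (w - xi)%C <> 0) by (intros E; apply Hwxi, Ceq_minus, E).
  assert (Hphi : phi w <> phi xi) by (apply Hinj; assumption).
  assert (Hqnz : q w <> 0)
    by (intros E; apply Hphi, Ceq_minus; rewrite Hsub, E by exact Hw; ring).
  assert (Hclose : Cmod (phi w - phi xi) < d1).
  { rewrite Hsub, Cmod_mult by exact Hw. pose proof (Cmod_ge_0 (w - xi)).
    pose proof (Rmin_l (d1 / M) d2).
    apply Rle_lt_trans with (M * Cmod (w - xi)); [apply Rmult_le_compat_r; lra |].
    replace d1 with (M * (d1 / M)) by (field; lra). apply Rmult_lt_compat_l; lra. }
  specialize (H1 (phi w) (Hin w Hw) Hphi Hclose).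
  set (K := ((h (phi w) - h (phi xi)) / (phi w - phi xi))%C) in H1.
  replace ((h (phi w) - h (phi xi)) / (w - xi) - D * q xi)%C
    with ((K - D) * q w + D * (q w - q xi))%C
    by (unfold K; rewrite Hsub by exact Hw; field; split; assumption).
  eapply Rle_lt_trans; [apply Cmod_triangle |]. rewrite !Cmod_mult.
  assert (Cmod (K - D) * Cmod (q w) <= eps / 2).
  { apply Rle_trans with (eps / (2 * M) * M); [| right; field; lra].
    apply Rmult_le_compat; try apply Cmod_ge_0; lra. }
  assert (Cmod D * Cmod (q w - q xi) < eps / 2).
  { pose proof (Cmod_ge_0 (q w - q xi)).
    apply Rle_lt_trans with (MD * Cmod (q w - q xi)); [unfold MD; nra |].
    replace (eps / 2) with (MD * (eps / (2 * MD))) by (field; lra).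
    apply Rmult_lt_compat_l; lra. }
  lra.
Qed.

Section Mobius.

Variables lam a : C.
Hypothesis Hlam : Cmod lam = 1.
Hypothesis Ha : Cmod a < 1.

Lemma mob_den_ge (w : C) : Cmod w <= 1 -> 1 - Cmod a <= Cmod (1 - Cconj a * w).
Proof.
  intros Hw. pose proof (Cmod_triangle (1 - Cconj a * w) (Cconj a * w)) as Htri.
  replace (1 - Cconj a * w + Cconj a * w)%C with (RtoC 1) in Htri by ring.
  rewrite Cmod_1, Cmod_mult, Cmod_conj in Htri.
  pose proof (Cmod_ge_0 a). pose proof (Cmod_ge_0 w). nra.
Qed.

Lemma mob_den_neq0 (w : C) : Cmod w <= 1 -> (1 - Cconj a * w)%C <> 0.
Proof.
  intros Hw E. pose proof (mob_den_ge w Hw) as Hge. rewrite E, Cmod_0 in Hge. lra.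
Qed.

Lemma mob_closed_disc (w : C) : Cmod w <= 1 -> Cmod (mob lam a w) <= 1.
Proof.
  intros Hw. pose proof (mob_den_neq0 w Hw) as Hn. pose proof (mob_den_ge w Hw).
  unfold mob. rewrite Cmod_mult, Hlam, Rmult_1_l, Cmod_div by exact Hn.
  assert (Hsq : Cmod (1 - Cconj a * w) ^ 2 - Cmod (a - w) ^ 2
                = (1 - Cmod a ^ 2) * (1 - Cmod w ^ 2)).
  { rewrite !Cmod2_alt. destruct a as [a1 a2], w as [w1 w2]. unfold Re, Im; simpl. ring. }
  assert (Hle : Cmod (a - w) <= Cmod (1 - Cconj a * w)).
  { pose proof (Cmod_ge_0 a). pose proof (Cmod_ge_0 w). pose proof (Cmod_ge_0 (a - w)).
    assert (0 <= (1 - Cmod a ^ 2) * (1 - Cmod w ^ 2)) by (apply Rmult_le_pos; nra). nra. }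
  apply Rmult_le_reg_r with (Cmod (1 - Cconj a * w)); [lra |].
  unfold Rdiv. rewrite Rmult_assoc, Rinv_l by lra. lra.
Qed.

Definition mob_quot (xi w : C) : C :=
  (lam * (a * Cconj a - 1) / ((1 - Cconj a * w) * (1 - Cconj a * xi)))%C.

Lemma mob_sub (xi w : C) : Cmod xi <= 1 -> Cmod w <= 1 ->
  (mob lam a w - mob lam a xi = mob_quot xi w * (w - xi))%C.
Proof.
  intros Hxi Hw. pose proof (mob_den_neq0 w Hw). pose proof (mob_den_neq0 xi Hxi).
  unfold mob, mob_quot. field. split; assumption.
Qed.

Lemma mob_quot_neq0 (xi w : C) : Cmod xi <= 1 -> Cmod w <= 1 -> mob_quot xi w <> 0.
Proof.
  intros Hxi Hw E. pose proof (mob_den_neq0 w Hw). pose proof (mob_den_neq0 xi Hxi).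
  assert (Hnum : (lam * (a * Cconj a - 1))%C <> 0).
  { apply Cmult_neq_0.
    - intros E'. rewrite E', Cmod_0 in Hlam. lra.
    - rewrite <- Cmod2_conj, <- RtoC_minus. intros E'. apply RtoC_inj in E'.
      pose proof (Cmod_ge_0 a). nra. }
  apply Hnum.
  replace (lam * (a * Cconj a - 1))%C
    with (mob_quot xi w * ((1 - Cconj a * w) * (1 - Cconj a * xi)))%C
    by (unfold mob_quot; field; split; assumption).
  rewrite E. ring.
Qed.

Lemma mob_quot_le (xi w : C) : Cmod xi <= 1 -> Cmod w <= 1 ->
  Cmod (mob_quot xi w) <= / (1 - Cmod a) ^ 2.
Proof.
  intros Hxi Hw. pose proof (mob_den_neq0 w Hw). pose proof (mob_den_neq0 xi Hxi).
  pose proof (mob_den_ge w Hw). pose proof (mob_den_ge xi Hxi). pose proof (Cmod_ge_0 a).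
  unfold mob_quot. rewrite Cmod_div, !Cmod_mult, Hlam by (apply Cmult_neq_0; assumption).
  rewrite <- Cmod2_conj, <- RtoC_minus, Cmod_R, Rabs_left1 by nra.
  apply Rle_trans with (1 * / ((1 - Cmod a) * (1 - Cmod a))); [| right; field; lra].
  unfold Rdiv. apply Rmult_le_compat; [nra | | nra |].
  - apply Rlt_le, Rinv_0_lt_compat, Rmult_lt_0_compat; lra.
  - apply Rinv_le_contravar; [nra | apply Rmult_le_compat; lra].
Qed.

Lemma mob_quot_continuous (xi : C) : Cmod xi <= 1 ->
  forall eps, 0 < eps -> exists delta, 0 < delta /\ forall w, Cmod w <= 1 ->
    Cmod (w - xi) < delta -> Cmod (mob_quot xi w - mob_quot xi xi) < eps.
Proof.
  intros Hxi eps Heps.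
  assert (Hb : 0 < (1 - Cmod a) ^ 3) by (apply pow_lt; lra).
  exists (eps * (1 - Cmod a) ^ 3). split; [nra |].
  intros w Hw Hd.
  pose proof (mob_den_neq0 w Hw). pose proof (mob_den_neq0 xi Hxi).
  pose proof (mob_den_ge xi Hxi). pose proof (mob_quot_le xi w Hxi Hw).
  pose proof (Cmod_ge_0 a). pose proof (Cmod_ge_0 (w - xi)).
  replace (mob_quot xi w - mob_quot xi xi)%C
    with (mob_quot xi w * (Cconj a * (w - xi)) / (1 - Cconj a * xi))%C
    by (unfold mob_quot; field; split; assumption).
  rewrite Cmod_div, !Cmod_mult, Cmod_conj by assumption.
  apply Rle_lt_trans with (/ (1 - Cmod a) ^ 2 * (1 * Cmod (w - xi)) / (1 - Cmod a)).
  - apply Rmult_le_compat.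
    + apply Rmult_le_pos; [apply Cmod_ge_0 | apply Rmult_le_pos; apply Cmod_ge_0].
    + apply Rlt_le, Rinv_0_lt_compat. lra.
    + apply Rmult_le_compat; [apply Cmod_ge_0 | nra | assumption | nra].
    + apply Rinv_le_contravar; lra.
  - replace (/ (1 - Cmod a) ^ 2 * (1 * Cmod (w - xi)) / (1 - Cmod a))
      with (Cmod (w - xi) / (1 - Cmod a) ^ 3) by (field; lra).
    apply Rmult_lt_reg_r with ((1 - Cmod a) ^ 3); [exact Hb |].
    unfold Rdiv. rewrite Rmult_assoc, Rinv_l by lra. lra.
Qed.

Lemma cderiv_cl_comp_mob (h : C -> C) (xi D : C) : Cmod xi <= 1 ->
  cderiv_cl h (mob lam a xi) D ->
  cderiv_cl (fun z => h (mob lam a z)) xi (D * mob_quot xi xi)%C.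
Proof.
  intros Hxi. apply cderiv_cl_comp.
  - exact mob_closed_disc.
  - intros w Hw Hwxi E.
    apply (Cmult_neq_0 (mob_quot xi w) (w - xi)).
    + exact (mob_quot_neq0 xi w Hxi Hw).
    + intros E'. apply Hwxi, Ceq_minus, E'.
    + rewrite <- (mob_sub xi w Hxi Hw), E. ring.
  - intros w Hw. exact (mob_sub xi w Hxi Hw).
  - exact (mob_quot_continuous xi Hxi).
Qed.

Lemma mob_quot_boundary (xi : C) : Cmod xi = 1 ->
  (mob_quot xi xi * xi = mob lam a xi * RtoC ((1 - Cmod a ^ 2) / Cmod (a - xi) ^ 2))%C.
Proof.
  intros Hxi.
  assert (Hxi0 : xi <> 0) by (intros E; rewrite E, Cmod_0 in Hxi; lra).
  assert (Haxi : (a - xi)%C <> 0) by (intros E; apply Ceq_minus in E; subst; lra).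
  assert (Hden : Cmod (a - xi) ^ 2 <> 0) by (apply pow_nonzero; intros E; apply Haxi, Cmod_eq_0, E).
  (* On the circle [Cconj xi = / xi], so both sides become rational functions of [xi]. *)
  assert (Hconj : Cconj xi = (/ xi)%C).
  { pose proof (Cmod2_conj xi) as E. rewrite Hxi, pow1 in E.
    replace (Cconj xi) with (xi * Cconj xi / xi)%C by (field; exact Hxi0).
    rewrite <- E. field. exact Hxi0. }
  assert (Hd : (1 - Cconj a * xi)%C <> 0) by (apply mob_den_neq0; lra).
  assert (Hd' : (Cconj a * xi - 1)%C <> 0)
    by (intros E; apply Hd; replace (1 - Cconj a * xi)%C with (- (Cconj a * xi - 1))%C by ring;
        rewrite E; ring).
  assert (Hca : (Cconj a - / xi)%C <> 0).
  { intros E. apply Ceq_minus in E. apply (f_equal Cmod) in E.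
    rewrite Cmod_conj, Cmod_inv, Hxi, Rinv_1 in E by exact Hxi0. lra. }
  rewrite RtoC_div, RtoC_minus, !Cmod2_conj, Cminus_conj, Hconj by exact Hden.
  replace (RtoC 1) with (RtoC (Cmod 1 ^ 2)) by (rewrite Cmod_1; f_equal; ring).
  rewrite Cmod2_conj.
  replace (Cconj 1) with (RtoC 1) by (apply injective_projections; simpl; ring).
  unfold mob_quot, mob. field. repeat split; assumption.
Qed.

End Mobius.

Lemma csum_ext (n : nat) (g h : nat -> C) :
  (forall k, (k < n)%nat -> g k = h k) -> csum n g = csum n h.
Proof.
  induction n as [| n IH]; intros Hgh; simpl; [reflexivity |].
  rewrite (IH (fun k Hk => Hgh k ltac:(lia))), (Hgh n) by lia. reflexivity.
Qed.

Lemma csum_mulr (n : nat) (g : nat -> C) (c : C) :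
  csum n (fun k => g k * c)%C = (csum n g * c)%C.
Proof. induction n as [| n IH]; simpl; [ring | rewrite IH; ring]. Qed.

Lemma Aval_ext (d : nat) (hv dh dh' : nat -> C) (xi : C) :
  (forall k, (k < d)%nat -> dh k = dh' k) -> Aval d hv dh xi = Aval d hv dh' xi.
Proof. intros Hdh. apply csum_ext. intros k Hk. now rewrite Hdh. Qed.

Lemma Aval_mulr (d : nat) (hv dh : nat -> C) (c xi : C) :
  Aval d hv (fun k => dh k * c)%C xi = Aval d hv dh (c * xi)%C.
Proof. apply csum_ext. intros k _. f_equal. f_equal. ring. Qed.

Lemma Aval_scal_real (d : nat) (hv dh : nat -> C) (z : C) (r : R) :
  Aval d hv dh (z * RtoC r)%C = (Aval d hv dh z * RtoC r)%C.
Proof.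
  unfold Aval, cinner. rewrite <- csum_mulr. apply csum_ext. intros k _.
  rewrite !Cmult_conj.
  replace (Cconj (RtoC r)) with (RtoC r) by (apply injective_projections; simpl; ring).
  ring.
Qed.

Lemma embedding_map_cderiv_cl (d : nat) (f : nat -> C -> C) (p : C) :
  embedding_map d f -> Cmod p <= 1 ->
  exists Df : nat -> C, forall k, (k < d)%nat -> cderiv_cl (f k) p (Df k).
Proof.
  intros [Hhol [_ [_ [_ [[F [HFf HF2]] _]]]]] Hp.
  apply (functional_choice (fun k L => (k < d)%nat -> cderiv_cl (f k) p L)).
  intros k. destruct (Nat.lt_ge_cases k d) as [Hk | Hk]; [| exists 0%C; lia].
  destruct (HF2 k Hk) as [[ux [uy [HRe _]]] [vx [vy [HIm _]]]].
  exists (ux p, vx p). intros _.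
  apply (cderiv_cl_of_C1_extension (F k) (f k) ux uy vx vy HRe HIm); [| | exact Hp].
  - intros w Hw. apply HFf; assumption.
  - intros z Hz. destruct (Hhol k z Hk Hz) as [l Hl].
    exists l. apply cderiv_eps_of_cderiv, Hl.
Qed.

Theorem lemma2p6 (d : nat) (f : nat -> C -> C) (lam alpha : C) :
  embedding_map d f ->
  Cmod lam = 1 -> Cmod alpha < 1 ->
  forall xi : C, Cmod xi = 1 ->
    (* the boundary derivatives exist *)
    (exists Df : nat -> C,
        forall k, (k < d)%nat -> cderiv_cl (f k) (mob lam alpha xi) (Df k)) /\
    (exists Dg : nat -> C,
        forall k, (k < d)%nat -> cderiv_cl (fun z => f k (mob lam alpha z)) xi (Dg k)) /\
    (* and the identity A_{f o mu}(xi) = A_f(mu xi) (1-|alpha|^2)/|alpha-xi|^2 *)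
    (forall Df Dg : nat -> C,
        (forall k, (k < d)%nat -> cderiv_cl (f k) (mob lam alpha xi) (Df k)) ->
        (forall k, (k < d)%nat -> cderiv_cl (fun z => f k (mob lam alpha z)) xi (Dg k)) ->
        Aval d (fun k => f k (mob lam alpha xi)) Dg xi =
        (Aval d (fun k => f k (mob lam alpha xi)) Df (mob lam alpha xi) *
         RtoC ((1 - (Cmod alpha)^2) / (Cmod (alpha - xi))^2))%C).
Proof.
  intros Hf Hlam Ha xi Hxi.
  assert (Hxi1 : Cmod xi <= 1) by lra.
  set (q := mob_quot lam alpha xi xi).
  destruct (embedding_map_cderiv_cl d f (mob lam alpha xi) Hf
              (mob_closed_disc lam alpha Hlam Ha xi Hxi1)) as [Df0 HDf0].
  split; [exists Df0; exact HDf0 | split].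
  - exists (fun k => Df0 k * q)%C. intros k Hk.
    apply cderiv_cl_comp_mob; auto.
  - intros Df Dg HDf HDg.
    rewrite (Aval_ext d _ Dg (fun k => Df k * q)%C).
    + rewrite Aval_mulr. unfold q. rewrite mob_quot_boundary, Aval_scal_real by assumption.
      reflexivity.
    + intros k Hk. apply (cderiv_cl_unique (fun z => f k (mob lam alpha z)) xi _ _ Hxi1); [apply HDg, Hk |].
      apply cderiv_cl_comp_mob; auto.
Qed.
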